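(* Let $G$ be a connected graph of order $n\geq 3$. If $\operatorname{diam}(G)=2$, then $prc(G)=\chi'(G)$.
   Context: A path in an edge-coloured graph is a rainbow path if its edges receive pairwise distinct colours. The proper rainbow connection number $prc(G)$ of a nontrivial connected graph is the minimum number of colours in a proper edge-colouring (adjacent edges get distinct colours) such that every two distinct vertices are joined by a rainbow path. $\chi'(G)$ is the chromatic index of $G$. *)

From mathcomp Require Import all_boot.
Set Implicit Arguments. Unset Strict Implicit. Unset Printing Implicit Defensive.

Definition simple_graph (T : finType) (e : rel T) : Prop :=
  irreflexive e /\ symmetric e.

Definition connected_graph (T : finType) (e : rel T) : Prop :=
  forall x y : T, connect e x y.

(* A walk x = x0, x1, .., xd
   is represented as x together with the sequence p = [:: x1; ...; xd]. *)
Definition is_dist (T : finType) (e : rel T) (x y : T) (d : nat) : Prop :=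
  (exists p : seq T, [/\ path e x p, last x p = y & size p = d]) /\
  (forall p : seq T, path e x p -> last x p = y -> d <= size p).

Definition diameter_is (T : finType) (e : rel T) (D : nat) : Prop :=
  (forall x y : T, exists2 d, is_dist e x y d & d <= D) /\
  (exists x y : T, is_dist e x y D).

(* An edge colouring is a function c : T -> T -> nat; only its values on edges
   matter. *)
Definition proper_edge_colouring (T : finType) (e : rel T) (k : nat)
    (c : T -> T -> nat) : Prop :=
  [/\ (forall x y, e x y -> c x y = c y x),
      (forall x y, e x y -> c x y < k) &
      (forall x y z, e x y -> e x z -> y != z -> c x y != c x z)].

(* A rainbow path from x to y: a path (no repeated vertices) whose edge
   colours are pairwise distinct. pairmap c x p lists the colours of the
   consecutive edges of the path x :: p. *)
Definition rainbow_path (T : finType) (e : rel T) (c : T -> T -> nat)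
    (x y : T) (p : seq T) : Prop :=
  [/\ path e x p, last x p = y, uniq (x :: p) & uniq (pairmap c x p)].

Definition proper_rainbow_connected (T : finType) (e : rel T) (k : nat)
    (c : T -> T -> nat) : Prop :=
  proper_edge_colouring e k c /\
  (forall x y : T, x != y -> exists p, rainbow_path e c x y p).

Definition chromatic_index_is (T : finType) (e : rel T) (k : nat) : Prop :=
  (exists c, proper_edge_colouring e k c) /\
  (forall j c, proper_edge_colouring e j c -> k <= j).

Definition prc_is (T : finType) (e : rel T) (k : nat) : Prop :=
  (exists c, proper_rainbow_connected e k c) /\
  (forall j c, proper_rainbow_connected e j c -> k <= j).

From mathcomp Require Import all_boot.

(* In a graph of diameter 2 any two distinct vertices are joined by a path
   with at most two edges, and such a path is rainbow for every proper edge
   colouring because its two edges are adjacent. So the proper rainbow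
   connected colourings are exactly the proper edge colourings, and the two
   minima coincide. *)

Section ShortRainbowPaths.

Variables (T : finType) (e : rel T).
Hypothesis simple_e : simple_graph e.

Lemma rainbow_path_edge (c : T -> T -> nat) (x y : T) :
  e x y -> rainbow_path e c x y [:: y].
Proof.
have [irr_e _] := simple_e.
move=> exy; split=> //=; first by rewrite exy.
by rewrite inE andbT; apply: contraTneq exy => ->; rewrite irr_e.
Qed.

Lemma rainbow_path2 (k : nat) (c : T -> T -> nat) (x a y : T) :
  proper_edge_colouring e k c -> e x a -> e a y -> x != y ->
  rainbow_path e c x y [:: a; y].
Proof.
have [irr_e sym_e] := simple_e.
move=> [c_sym _ c_proper] exa eay xy; split=> //=; first by rewrite exa eay.
- have xa : x != a by apply: contraTneq exa => ->; rewrite irr_e.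
  have ay : a != y by apply: contraTneq eay => ->; rewrite irr_e.
  by rewrite !inE negb_or xa xy ay.
- by rewrite inE andbT c_sym // c_proper // sym_e.
Qed.

Lemma proper_rainbow_connected_short_walks (k : nat) (c : T -> T -> nat) :
  (forall x y : T, x != y ->
     exists p, [/\ path e x p, last x p = y & size p <= 2]) ->
  proper_edge_colouring e k c -> proper_rainbow_connected e k c.
Proof.
move=> short_walk c_proper; split=> // x y xy.
have [[|a [|b [|? ?]]] [/= walk_xp last_p size_p]] := short_walk x y xy => //.
- by move: xy; rewrite last_p eqxx.
- by exists [:: y]; rewrite -last_p; apply: rainbow_path_edge; rewrite andbT in walk_xp.
- move: walk_xp => /and3P[exa eab _]; rewrite /= in last_p; subst b.
  by exists [:: a; y]; apply: rainbow_path2 c_proper exa eab xy.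
Qed.

End ShortRainbowPaths.

Lemma short_walks_diameter2 (T : finType) (e : rel T) (x y : T) :
  diameter_is e 2 -> exists p, [/\ path e x p, last x p = y & size p <= 2].
Proof.
move=> [dist_le2 _]; have [d [[p [? ? <-]] _] ?] := dist_le2 x y.
by exists p.
Qed.

Lemma chromatic_index_prc (T : finType) (e : rel T) (k : nat) :
  (forall j c, proper_edge_colouring e j c -> proper_rainbow_connected e j c) ->
  chromatic_index_is e k <-> prc_is e k.
Proof.
move=> proper_rc; split.
- move=> [[c c_proper] kmin]; split; first by exists c; apply: proper_rc.
  by move=> j c' [c'_proper _]; apply: kmin c'_proper.
- move=> [[c [c_proper _]] kmin]; split; first by exists c.
  by move=> j c' /proper_rc; apply: kmin.
Qed.

Theorem proposition5p1 (T : finType) (e : rel T) :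
  simple_graph e -> connected_graph e -> 3 <= #|T| -> diameter_is e 2 ->
  forall k : nat, chromatic_index_is e k <-> prc_is e k.
Proof.
move=> simple_e _ _ diam2 k; apply: chromatic_index_prc => j c.
apply: proper_rainbow_connected_short_walks => // x y _.
exact: short_walks_diameter2.
Qed.
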